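(* (1) If $f_1,\dots,f_k\in\mathrm{CN}^n$ and $w_1,\dots,w_k\ge 0$, then $g(x)=\max_{1\le i\le k} w_i f_i(x)$ with $\mathrm{dom}(g)=\bigcap_{i}\mathrm{dom}(f_i)$ belongs to $\mathrm{CN}^n$. (2) If $f\in\mathrm{CN}^n$ and $h:\mathbb{R}\to\mathbb{R}$ is conic and non-decreasing, then $h\circ f\in\mathrm{CN}^n$. (3) If $f\in\mathrm{CN}^m$, $A\in\mathbb{R}^{m\times n}$, $b\in\mathbb{R}^m$, then $g(x)=f(Ax+b)$, with $\mathrm{dom}(g)=\{x: Ax+b\in\mathrm{dom}(f)\}$, belongs to $\mathrm{CN}^n$. (4) If $f_1,f_2\in\mathrm{CN}^n$ and $D=\mathrm{dom}(f_1)\cap\mathrm{dom}(f_2)$, then $g(x)=(f_1(x),f_2(x)):D\to\mathbb{R}^2$ is conic with respect to the lexicographic order on $\mathbb{R}^2$.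
   Context: A function $f:\mathrm{dom}(f)\to \Omega$, with $\mathrm{dom}(f)\subseteq\mathbb{R}^n$ convex and $\Omega$ a totally ordered set (e.g. $\mathbb{R}$, or $\mathbb{R}^2$ with lexicographic order), is conic if for all $y,z\in\mathrm{dom}(f)$ and all $t\ge 0$ with $f(y)\le f(z)$ and $z+t(z-y)\in\mathrm{dom}(f)$, we have $f(z+t(z-y))\ge f(z)$. $\mathrm{CN}^n$ denotes the class of real-valued conic functions with domain a convex subset of $\mathbb{R}^n$. *)

(* Reals are modelled by an arbitrary realFieldType R
   (the statement is purely order-theoretic/affine, so this is a faithful
   generalisation of R = the real numbers). *)
From HB Require Import structures.
From mathcomp Require Import all_boot all_order all_algebra.
Set Implicit Arguments. Unset Strict Implicit. Unset Printing Implicit Defensive.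
Import Order.TTheory GRing.Theory Num.Theory.
Local Open Scope ring_scope.

Definition convex_set (R : realFieldType) (V : lmodType R) (D : V -> Prop) :=
  forall (x y : V) (t : R), D x -> D y -> 0 <= t -> t <= 1 ->
    D ((1 - t) *: x + t *: y).

(* f : dom(f) -> Omega is conic w.r.t. the total order le on Omega;
   f is a total function on V, only its values on D matter. *)
Definition conic (R : realFieldType) (V : lmodType R) (Omega : Type)
  (le : Omega -> Omega -> Prop) (D : V -> Prop) (f : V -> Omega) :=
  convex_set D /\
  forall (y z : V) (t : R), D y -> D z -> 0 <= t ->
    le (f y) (f z) -> D (z + t *: (z - y)) ->
    le (f z) (f (z + t *: (z - y))).

Definition CN (R : realFieldType) (n : nat) (D : 'cV[R]_n -> Prop)
  (f : 'cV[R]_n -> R) := conic (fun a b : R => a <= b) D f.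

Definition lexle (R : realFieldType) (p q : R * R) : Prop :=
  p.1 < q.1 \/ (p.1 = q.1 /\ p.2 <= q.2).

From HB Require Import structures.
From mathcomp Require Import all_boot all_order all_algebra.
Import Order.TTheory GRing.Theory Num.Theory.
Local Open Scope ring_scope.

(* Everything happens on the ray from y through z.  A maximum is attained by
   some f_j, which its own conicity pushes along the ray; an affine map sends
   rays to rays.  For h o f and for the lexicographic pair one needs the strict
   form of conicity (f y < f z forces f z < f on the ray), obtained by running
   the ray backwards from its far end through z to y.  For h o f, if f drops
   along the ray then f y > f z, and the values f y, f z, f(ray) lie on a ray
   of the real line, where conicity of h applies. *)

Lemma convex_setI (R : realFieldType) (V : lmodType R) (D1 D2 : V -> Prop) :
  convex_set D1 -> convex_set D2 -> convex_set (fun x => D1 x /\ D2 x).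
Proof.
by move=> cD1 cD2 x y t [D1x D2x] [D1y D2y] t0 t1; split; [apply: cD1 | apply: cD2].
Qed.

Lemma convex_set_bigcap (R : realFieldType) (V : lmodType R) (I : Type)
    (D : I -> V -> Prop) :
  (forall i, convex_set (D i)) -> convex_set (fun x => forall i, D i x).
Proof. by move=> cD x y t Dx Dy t0 t1 i; apply: cD. Qed.

Section RealConic.
Variables (R : realFieldType) (V : lmodType R).
Local Notation conicR := (@conic R V R (fun a b : R => a <= b)).

Lemma ray_reverse (y z : V) (t : R) :
  t != 0 -> z + t^-1 *: (z - (z + t *: (z - y))) = y.
Proof.
move=> t_neq0.
rewrite opprD addrA subrr add0r scalerN scalerA mulVf // scale1r opprB.
by rewrite addrC subrK.
Qed.

Lemma conic_lt {D : V -> Prop} {f : V -> R} {y z : V} {t : R} :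
  conicR D f -> D y -> D z -> 0 < t -> D (z + t *: (z - y)) ->
  f y < f z -> f z < f (z + t *: (z - y)).
Proof.
move=> [_ cf] Dy Dz t_gt0 Dz' fyz; rewrite ltNge; apply/negP => fz'z.
have tV_ge0 : 0 <= t^-1 by rewrite invr_ge0 ltW.
have := cf _ _ t^-1 Dz' Dz tV_ge0 fz'z.
rewrite ray_reverse ?gt_eqF // => /(_ Dy).
by rewrite leNgt fyz.
Qed.

Lemma conic_scale {D : V -> Prop} {f : V -> R} {w : R} :
  0 <= w -> conicR D f -> conicR D (fun x => w * f x).
Proof.
rewrite le_eqVlt => /orP[/eqP <- | w_gt0] [cvx cf]; split => //.
  by move=> *; rewrite !mul0r.
by move=> y z t Dy Dz t0; rewrite !ler_pM2l //; apply: cf.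
Qed.

Lemma bigmax_attained {I : finType} (F : I -> R) (i0 : I) :
  exists j, \big[Num.max/F i0]_i F i = F j.
Proof.
elim/big_ind: _ => [|a b [i ->] [j ->] | i _]; [by exists i0 | | by exists i].
by case: (leP (F i) (F j)) => _; [exists j | exists i].
Qed.

Lemma conic_bigmax {I : finType} {D : I -> V -> Prop} (F : I -> V -> R) (i0 : I) :
  (forall i, conicR (D i) (F i)) ->
  conicR (fun x => forall i, D i x) (fun x => \big[Num.max/F i0 x]_i F i x).
Proof.
move=> cF; split; first by apply: convex_set_bigcap => i; case: (cF i).
move=> y z t Dy Dz t0 gyz Dz'.
have [j gz] := bigmax_attained (F^~ z) i0; rewrite gz in gyz *.
have Fj_yz : F j y <= F j z := le_trans (le_bigmax (F i0 y) (F^~ y) j) gyz.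
have Fj_ray : F j z <= F j (z + t *: (z - y)) by case: (cF j) => _; apply.
exact: le_trans Fj_ray (le_bigmax _ (F^~ _) j).
Qed.

Lemma conic_comp {D : V -> Prop} {f : V -> R} {h : R -> R} :
  conicR D f -> @conic R R^o R (fun a b : R => a <= b) (fun _ => True) h ->
  {homo h : a b / a <= b} -> conicR D (fun x => h (f x)).
Proof.
move=> [cvx cf] [_ ch] h_mono; split => // y z t Dy Dz t0 hyz Dz'.
set c := f (z + t *: (z - y)).
have [fzc | fcz] := leP (f z) c; first exact: h_mono.
have fzy : f z < f y by rewrite ltNge; apply/negP => fyz; rewrite ltNge cf in fcz.
have c_ray : f z + ((c - f z) / (f z - f y)) *: (f z - f y : R^o) = c.
  by rewrite [_ *: _]mulrVK ?unitfE ?subr_eq0 ?lt_eqF // addrC subrK.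
rewrite -c_ray; apply: ch; rewrite ?c_ray //.
by rewrite -mulrNN -invrN !opprB divr_ge0 // subr_ge0 ltW.
Qed.

Lemma conic_lex_pair {D1 D2 : V -> Prop} {f1 f2 : V -> R} :
  conicR D1 f1 -> conicR D2 f2 ->
  conic (@lexle R) (fun x => D1 x /\ D2 x) (fun x => (f1 x, f2 x)).
Proof.
move=> c1 c2; split; first exact: convex_setI c1.1 c2.1.
move=> y z t [D1y D2y] [D1z D2z] t0 fyz [D1z' D2z']; rewrite /lexle /= in fyz *.
have f1yz : f1 y <= f1 z by case: fyz => [/ltW | [->]].
have := c1.2 _ _ _ D1y D1z t0 f1yz D1z'; rewrite le_eqVlt => /orP[/eqP f1z | ]; last by left.
right; split => //; case: fyz => [f1lt | [_ f2yz]]; last exact: c2.2.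
move: t0; rewrite le_eqVlt => /orP[/eqP <- | t_gt0]; first by rewrite scale0r addr0.
by move: (conic_lt c1 D1y D1z t_gt0 D1z' f1lt); rewrite -f1z ltxx.
Qed.

Lemma conic_affine {U : lmodType R} {D : V -> Prop} {f : V -> R}
    (L : {linear U -> V}) (b : V) :
  conicR D f -> @conic R U R (fun a b : R => a <= b)
    (fun x => D (L x + b)) (fun x => f (L x + b)).
Proof.
have affine_comb x y t :
  L ((1 - t) *: x + t *: y) + b = (1 - t) *: (L x + b) + t *: (L y + b).
  by rewrite linearD !linearZ !scalerDr addrACA -scalerDl subrK scale1r.
have affine_ray y z t :
  L (z + t *: (z - y)) + b = (L z + b) + t *: ((L z + b) - (L y + b)).
  by rewrite opprD addrACA subrr addr0 linearD linearZ linearB addrAC.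
move=> [cvx cf]; split=> [x y t Dx Dy t0 t1 | y z t Dy Dz t0 fyz].
  by rewrite affine_comb; apply: cvx.
by rewrite affine_ray; apply: cf.
Qed.

End RealConic.

Theorem mainTheorem3 (R : realFieldType) :
  (forall (n k : nat) (D : 'I_k.+1 -> 'cV[R]_n -> Prop)
          (f : 'I_k.+1 -> 'cV[R]_n -> R) (w : 'I_k.+1 -> R),
     (forall i, CN (D i) (f i)) -> (forall i, 0 <= w i) ->
     CN (fun x => forall i, D i x)
        (fun x => \big[Num.max/(w ord0 * f ord0 x)]_(i < k.+1) (w i * f i x)))
  /\
  (forall (n : nat) (D : 'cV[R]_n -> Prop) (f : 'cV[R]_n -> R) (h : R -> R),
     CN D f ->
     @conic R R^o R (fun a b : R => a <= b) (fun _ => True) h ->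
     {homo h : a b / a <= b} ->
     CN D (fun x => h (f x)))
  /\
  (forall (m n : nat) (D : 'cV[R]_m -> Prop) (f : 'cV[R]_m -> R)
          (A : 'M[R]_(m, n)) (b : 'cV[R]_m),
     CN D f ->
     CN (fun x => D (A *m x + b)) (fun x => f (A *m x + b)))
  /\
  (forall (n : nat) (D1 D2 : 'cV[R]_n -> Prop) (f1 f2 : 'cV[R]_n -> R),
     CN D1 f1 -> CN D2 f2 ->
     conic (@lexle R) (fun x => D1 x /\ D2 x) (fun x => (f1 x, f2 x))).
Proof.
split; [|split; [|split]].
- move=> n k D f w cf w_ge0.
  apply: (@conic_bigmax _ _ _ _ (fun i x => w i * f i x)) => i.
  exact: conic_scale (w_ge0 i) (cf i).
- by move=> n D f h; apply: conic_comp.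
- by move=> m n D f A b; apply: conic_affine (mulmx A) b.
- by move=> n D1 D2 f1 f2; apply: conic_lex_pair.
Qed.
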